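(* Let $G=(V,E)$ be a graph and $W$ a vertex cover of $G$. Let $\Omega$ be a potential maximal clique of $G$ having an active separator $S\subseteq\Omega$ with an active pair $x,y\in S$. Let $C$ be the unique connected component of $G-S$ intersecting $\Omega$, and let $D_S$ be the union of all other connected components of $G-S$. Let $D_x$ be the union of those components of $G-\Omega$ that are contained in $C$ and contain a neighbor of $x$, and let $D_y$ be the union of those components of $G-\Omega$ that are contained in $C$ and contain no neighbor of $x$. Put $D_S^W=D_S\cap W$, $D_x^W=D_x\cap W$, $D_y^W=D_y\cap W$. Then at least one of the following holds: (1) there is a vertex $t\in\Omega$ with $\Omega\setminus S=N(t)\cap C$; (2) there is a vertex $t\in\Omega$ with $\Omega=N[t]$; (3) for every vertex $z\notin W$, we have $z\in\Omega$ if and only if either (a) $N(z)$ intersects $D_S^W$ and intersects $D_x^W\cup D_y^W$, or (b) $N(z)$ does not intersect $D_S^W$, but $N(z)$ intersects each of $D_x^W\cup\{x\}$, $D_y^W\cup\{y\}$ and $D_x^W\cup D_y^W$.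
   Context: All graphs are finite, simple and undirected; $N(t)$ is the open neighborhood, $N[t]=N(t)\cup\{t\}$, and for a set $X$, $N(X)=\bigcup_{v\in X}N(v)\setminus X$. A vertex cover is a set of vertices meeting every edge. A minimal separator of $G$ is a set $S$ that is, for some vertices $u,v$, an inclusion-minimal set whose removal puts $u,v$ in different connected components. A graph is chordal if every cycle of length at least 4 has a chord; a minimal triangulation of $G$ is a chordal supergraph $H$ on the same vertex set such that no proper subset of $E(H)$ containing $E(G)$ gives a chordal graph. A set $\Omega\subseteq V$ is a potential maximal clique of $G$ if it is a maximal clique of some minimal triangulation of $G$. (Equivalently: letting $C_1,\dots,C_p$ be the components of $G-\Omega$ and $S_i=N(C_i)$, each $S_i$ is a proper subset of $\Omega$, and any two non-adjacent vertices of $\Omega$ both have neighbors in some common $C_i$; in that case the $S_i$ are exactly the minimal separators of $G$ contained in $\Omega$, and for each such $S_i$ the set $\Omega\setminus S_i$ lies in a unique component of $G-S_i$.) Active separator: let $\Omega$ be a potential maximal clique, $C_1,\dots,C_p$ the components of $G-\Omega$ and $S_i=N(C_i)$. Let $G^+$ be obtained from $G$ by making a clique of every $S_j$ ($2\le j\le p$) with $S_j\not\subseteq S_1$. Then $S_1$ is an active separator for $\Omega$ if $\Omega$ is not a clique of $G^+$, and a pair $x,y\in\Omega$ non-adjacent in $G^+$ is an active pair (necessarily $x,y\in S_1$). $\Omega$ has an active separator if some $S_i$ is active for $\Omega$ (with the roles of indices permuted). *)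

From mathcomp Require Import all_boot.
Set Implicit Arguments.
Unset Strict Implicit.
Unset Printing Implicit Defensive.

Section Graphs.
Variable T : finType.

Definition simple_graph (e : rel T) : Prop := symmetric e /\ irreflexive e.
Definition vertex_cover (e : rel T) (W : {set T}) : Prop :=
  forall u v, e u v -> (u \in W) || (v \in W).

Definition nbr (e : rel T) (t : T) : {set T} := [set u | e t u].
Definition cnbr (e : rel T) (t : T) : {set T} := t |: nbr e t.
Definition nbrs (e : rel T) (X : {set T}) : {set T} :=
  (\bigcup_(v in X) nbr e v) :\: X.

Definition restr (e : rel T) (X : {set T}) : rel T :=
  [rel a b | [&& a \notin X, b \notin X & e a b]].
(* connected component of G - X containing v (meaningful for v \notin X) *)
Definition comp (e : rel T) (X : {set T}) (v : T) : {set T} :=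
  [set u | connect (restr e X) v u].
Definition comps (e : rel T) (X : {set T}) : {set {set T}} :=
  [set comp e X v | v in ~: X].

Definition chordal (H : rel T) : Prop :=
  forall s : seq T, uniq s -> 3 < size s -> cycle H s ->
    exists x y, [/\ x \in s, y \in s, H x y, next s x != y & next s y != x].

Definition triangulation (e H : rel T) : Prop :=
  [/\ simple_graph H, subrel e H & chordal H].
Definition minimal_triangulation (e H : rel T) : Prop :=
  triangulation e H /\
  forall H' : rel T, triangulation e H' -> subrel H' H -> subrel H H'.

Definition clique (H : rel T) (K : {set T}) : Prop :=
  forall x y, x \in K -> y \in K -> x != y -> H x y.
Definition maximal_clique (H : rel T) (K : {set T}) : Prop :=
  clique H K /\ forall v, v \notin K -> exists2 x, x \in K & ~~ H v x.

Definition pmc (e : rel T) (Om : {set T}) : Prop :=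
  exists H : rel T, minimal_triangulation e H /\ maximal_clique H Om.

(* G^+ : make a clique of every S_j = N(C_j), C_j a component of G - Om,
   with S_j not contained in S *)
Definition plus_rel (e : rel T) (Om S : {set T}) : rel T :=
  fun x y => e x y ||
    ((x != y) && [exists C in comps e Om,
        [&& x \in nbrs e C, y \in nbrs e C & ~~ (nbrs e C \subset S)]]).

Definition active_sep (e : rel T) (Om S : {set T}) : Prop :=
  [/\ pmc e Om,
      exists2 C, C \in comps e Om & S = nbrs e C
    & ~ clique (plus_rel e Om S) Om].

Definition active_pair (e : rel T) (Om S : {set T}) (x y : T) : Prop :=
  [/\ active_sep e Om S, x \in Om, y \in Om, x != y & ~~ plus_rel e Om S x y].

End Graphs.

From Pilot Require Import Defs.
From mathcomp Require Import all_boot.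
From Stdlib Require Import Classical.
Set Implicit Arguments.
Unset Strict Implicit.
Unset Printing Implicit Defensive.

(* The key fact about a potential maximal clique [Om] is that two non-adjacent
   vertices of [Om] both see some component of G - [Om]: otherwise the minimal
   triangulation H could lose the edge between them, because keeping only the
   edges of H inside each closed component, plus [Om] minus that edge, stays
   chordal.  Consequently [Om :\: S] lies in the component [C] of G - [S], the
   components of G - [Om] inside [C] partition [C :\: Om] (so D_x and D_y split
   it), and none of them sees both [x] and [y], since [x y] is not an edge of
   G^+.  A vertex [z] of [S = N(C1)] sees D_S through [C1], and sees [C :\: Om]
   unless [Om :\: S = N(z) :&: C]; a vertex of [Om :\: S] sees nothing of D_S,
   reaches [x] and [y] directly or through a component inside [C], and sees
   [C :\: Om] unless [Om = N[z]].  Conversely a vertex outside [Om] lies in a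
   single component of G - [Om], which rules out (a) and (b).  The neighbours
   of a vertex outside the vertex cover [W] lie in [W], so intersecting with
   [W] changes nothing. *)

Lemma meetP (T : finType) (A B : {set T}) :
  reflect (exists2 u, u \in A & u \in B) (~~ [disjoint A & B]).
Proof.
rewrite -setI_eq0; apply: (iffP (set0Pn _)) => [[u]|[u uA uB]].
  by rewrite inE => /andP[]; exists u.
by exists u; rewrite inE uA.
Qed.

Lemma nbr_meet (T : finType) (e : rel T) (z d : T) (A : {set T}) :
  e z d -> d \in A -> ~~ [disjoint nbr e z & A].
Proof. by move=> ezd dA; apply/meetP; exists d; rewrite ?inE. Qed.

Lemma disjoint_setIr_sub (T : finType) (N A W : {set T}) :
  N \subset W -> [disjoint N & A :&: W] = [disjoint N & A].
Proof. by move=> NW; rewrite -!setI_eq0 [A :&: W]setIC setIA (setIidPl NW). Qed.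

Lemma connect_forward_closed (T : finType) (r : rel T) (P : pred T) :
  (forall u w, P u -> r u w -> P w) -> forall u w, P u -> connect r u w -> P w.
Proof.
move=> cl u w Pu /connectP[p pth ->]; elim: p u Pu pth => //= a p IH u Pu /andP[ra pa].
exact: IH (cl _ _ Pu ra) pa.
Qed.

Section Components.
Variable T : finType.
Variable e : rel T.
Hypothesis esym : symmetric e.
Implicit Types (X Y D : {set T}) (u v w : T).

Lemma restr_sym X : symmetric (restr e X).
Proof. by move=> u v; rewrite /restr /= esym; case: (u \in X); case: (v \in X). Qed.

Lemma mem_comp X v : v \in Defs.comp e X v.
Proof. by rewrite inE connect0. Qed.

Lemma comp_notin X v u : v \notin X -> u \in Defs.comp e X v -> u \notin X.
Proof.
move=> vX; rewrite inE; apply: (connect_forward_closed (P := fun u => u \notin X)) => //.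
by move=> a b _ /and3P[].
Qed.

Lemma comp_eq X v u : u \in Defs.comp e X v -> Defs.comp e X u = Defs.comp e X v.
Proof.
rewrite inE => vu; apply/setP => w; rewrite !inE.
apply/idP/idP => [|vw]; first exact: connect_trans.
by apply: connect_trans vw; rewrite (sym_connect_sym (restr_sym X)).
Qed.

Lemma comp_in_comps X u : u \notin X -> Defs.comp e X u \in comps e X.
Proof. by move=> uX; apply/imsetP; exists u; rewrite ?inE. Qed.

Lemma comps_notin X D u : D \in comps e X -> u \in D -> u \notin X.
Proof. by case/imsetP => v; rewrite inE => vX -> /(comp_notin vX). Qed.

Lemma comps_eq X D u : D \in comps e X -> u \in D -> D = Defs.comp e X u.
Proof. by case/imsetP => v _ -> /comp_eq ->. Qed.

Lemma comps_meet_eq X D1 D2 u :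
  D1 \in comps e X -> D2 \in comps e X -> u \in D1 -> u \in D2 -> D1 = D2.
Proof. by move=> HD1 HD2 uD1 uD2; rewrite (comps_eq HD1 uD1) (comps_eq HD2 uD2). Qed.

Lemma comps_edge X D u w : D \in comps e X -> u \in D -> e u w -> w \notin X -> w \in D.
Proof.
move=> HD uD euw wX; rewrite (comps_eq HD uD) inE; apply: connect1.
by rewrite /restr /= (comps_notin HD uD) wX euw.
Qed.

Lemma nbrsP X D w : D \in comps e X ->
  reflect (exists2 d, d \in D & e d w /\ w \notin D) (w \in nbrs e D).
Proof.
move=> HD; rewrite /nbrs inE.
apply: (iffP andP) => [[wD /bigcupP[d dD]]|[d dD [edw wD]]].
  by rewrite inE => edw; exists d.
by split => //; apply/bigcupP; exists d; rewrite ?inE.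
Qed.

Lemma nbrs_notin D u : u \in nbrs e D -> u \notin D.
Proof. by rewrite /nbrs inE => /andP[]. Qed.

Lemma nbrs_comps_sub X D w : D \in comps e X -> w \in nbrs e D -> w \in X.
Proof.
move=> HD /(nbrsP _ HD)[d dD [edw wD]]; apply: contraR wD => wX.
exact: comps_edge HD dD edw wX.
Qed.

Lemma in_nbrs_comps X D d w :
  D \in comps e X -> d \in D -> e d w -> w \in X -> w \in nbrs e D.
Proof.
move=> HD dD edw wX; apply/(nbrsP _ HD); exists d => //; split => //.
by apply: contraL wX => /(comps_notin HD).
Qed.

Lemma comps_sub_comp X Y D u :
  X \subset Y -> D \in comps e Y -> u \in D -> D \subset Defs.comp e X u.
Proof.
move=> XY HD uD; apply/subsetP => w; rewrite (comps_eq HD uD) !inE.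
apply: connect_sub => a b /and3P[aY bY eab]; apply: connect1.
by rewrite /restr /= eab !(contra (subsetP XY _)).
Qed.

Lemma comps_of_nbrs_sub X Y D :
  X \subset Y -> D \in comps e Y -> nbrs e D \subset X -> D \in comps e X.
Proof.
move=> XY HD NX; have /imsetP[v] := HD; rewrite inE => vY DE.
have vD : v \in D by rewrite DE mem_comp.
have vX : v \notin X by apply: contra vY; apply: subsetP.
suff -> : D = Defs.comp e X v by apply: comp_in_comps.
apply/eqP; rewrite eqEsubset (comps_sub_comp XY HD vD).
apply/subsetP => w; rewrite inE; apply: connect_forward_closed vD => a b aD /and3P[_ bX eab].
have [bY|bY] := boolP (b \in Y); last exact: comps_edge HD aD eab bY.
by move: bX; rewrite (subsetP NX) // (in_nbrs_comps HD aD eab bY).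
Qed.

Lemma bigcup_comps_neq X C : C \in comps e X ->
  \bigcup_(D in comps e X | D != C) D = ~: (C :|: X).
Proof.
move=> HC; apply/setP => u; rewrite !inE negb_or; apply/bigcupP/andP.
  case=> D /andP[HD DC] uD; split; last exact: comps_notin HD uD.
  by apply: contra DC => uC; rewrite (comps_meet_eq HD HC uD uC).
case=> uC uX; exists (Defs.comp e X u); last exact: mem_comp.
rewrite comp_in_comps //=; apply: contraNneq uC => <-; exact: mem_comp.
Qed.

Lemma bigcup_comps_sub X Y C : X \subset Y -> C \in comps e X ->
  \bigcup_(D in comps e Y | D \subset C) D = C :\: Y.
Proof.
move=> XY HC; apply/setP => u; rewrite !inE; apply/bigcupP/andP.
  by case=> D /andP[HD DC] uD; rewrite (comps_notin HD uD) (subsetP DC).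
case=> uY uC; exists (Defs.comp e Y u); last exact: mem_comp.
rewrite comp_in_comps //= (comps_eq HC uC).
exact: comps_sub_comp XY (comp_in_comps uY) (mem_comp _ _).
Qed.

End Components.

Section NextClosed.
Variable T : eqType.

Lemma next_nth_mod (s : seq T) x0 i : uniq s -> i < size s ->
  next s (nth x0 s i) = nth x0 s (i.+1 %% size s).
Proof.
move=> U lti; rewrite next_nth mem_nth //.
case: s U lti => [//|y p] U lti; rewrite index_uniq //=.
case: (ltnP i.+1 (size p).+1) => [lt|ge].
  by rewrite modn_small //=; apply: set_nth_default; rewrite -ltnS.
have -> : i = size p by apply/eqP; rewrite eqn_leq -ltnS lti -ltnS ge.
by rewrite modnn nth_default.
Qed.

Lemma next_closed_all (s : seq T) (P : pred T) x0 : uniq s -> x0 \in s -> P x0 ->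
  (forall x, x \in s -> P x -> P (next s x)) -> forall x, x \in s -> P x.
Proof.
move=> U x0s Px0 cl.
have n0 : 0 < size s by case: s x0s {U cl}.
pose k := index x0 s.
have Pk m : P (nth x0 s ((k + m) %% size s)).
  elim: m => [|m IH]; first by rewrite addn0 modn_small ?nth_index ?index_mem.
  have := cl _ (mem_nth _ (ltn_pmod _ n0)) IH.
  by rewrite next_nth_mod ?ltn_pmod // -addn1 modnDml -addnA addn1.
move=> x xs; have := Pk ((size s - k) + index x s).
have kl : k <= size s by apply: ltnW; rewrite index_mem.
by rewrite addnA subnKC // modnDl modn_small ?index_mem // nth_index.
Qed.

End NextClosed.

Definition has_chord (T : eqType) (H : rel T) (s : seq T) : Prop :=
  exists x y, [/\ x \in s, y \in s, H x y, next s x != y & next s y != x].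

Section Completion.
Variable T : finType.
Variables (e H : rel T) (Om : {set T}) (a b : T).
Hypothesis esym : symmetric e.
Hypothesis H_simple : simple_graph H.
Hypothesis eH : subrel e H.
Hypothesis H_chordal : chordal H.
Hypothesis Om_clique : clique H Om.
Hypothesis ab_apart :
  forall D, D \in comps e Om -> ~~ ((a \in nbrs e D) && (b \in nbrs e D)).

(* Keep [e], keep the edges of [H] inside every [D :|: nbrs e D], and make [Om]
   a clique minus the pair [a b]; since no component sees both [a] and [b], the
   result is again a chordal supergraph of [e] inside [H]. *)
Definition completion : rel T := fun u v =>
  [|| e u v,
      [exists D in comps e Om, [&& u \in D :|: nbrs e D, v \in D :|: nbrs e D & H u v]]
    | [&& u \in Om, v \in Om, u != v & ~~ (((u == a) && (v == b)) || ((u == b) && (v == a)))]].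

Lemma completion_sym : symmetric completion.
Proof.
case: H_simple => Hs _ u v; rewrite /completion esym Hs eq_sym.
congr [|| _, _ | _].
  by apply: eq_existsb => D; case: (u \in _); case: (v \in _).
by rewrite [(u == a) && _]andbC [(u == b) && _]andbC [_ || (_ && _)]orbC;
  case: (u \in Om); case: (v \in Om).
Qed.

Lemma completion_sub : subrel completion H.
Proof.
move=> u v /or3P[/eH //| /existsP[D /and4P[_ _ _ //]] | /and4P[uO vO uv _]].
exact: Om_clique.
Qed.

Lemma completion_out_comp D u w : D \in comps e Om -> u \in D ->
  completion u w -> w \notin D -> w \in nbrs e D.
Proof.
move=> HD uD /or3P[euw | /existsP[D' /and4P[HD' uD' wD' _]] | /and4P[uO _ _ _]] wD.
- have [wO|wO] := boolP (w \in Om); first exact: in_nbrs_comps HD uD euw wO.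
  by rewrite (comps_edge esym HD uD euw wO) in wD.
- have uO := comps_notin HD uD.
  move: uD'; rewrite inE => /orP[uD'|/(nbrs_comps_sub esym HD')]; last by rewrite (negbTE uO).
  rewrite -(comps_meet_eq esym HD HD' uD uD') inE (negbTE wD) in wD'.
  exact: wD'.
- by rewrite (negbTE (comps_notin HD uD)) in uO.
Qed.

Lemma nbrs_completion D u v : D \in comps e Om ->
  u \in nbrs e D -> v \in nbrs e D -> u != v -> completion u v.
Proof.
move=> HD uN vN uv; apply/or3P; apply: Or33.
rewrite (nbrs_comps_sub esym HD uN) (nbrs_comps_sub esym HD vN) uv /=.
by apply: contra (ab_apart HD) => /orP[] /andP[/eqP <- /eqP <-]; rewrite uN vN.
Qed.

Lemma completion_chord_comp D s : D \in comps e Om -> {subset s <= D :|: nbrs e D} ->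
  uniq s -> 3 < size s -> cycle completion s -> has_chord completion s.
Proof.
move=> HD sub U sz cyc.
have [x [y [xs ys Hxy nxy nyx]]] := H_chordal U sz (sub_cycle completion_sub cyc).
exists x, y; split => //; apply/or3P; apply: Or32; apply/existsP; exists D.
by rewrite HD !sub.
Qed.

Lemma completion_chord_Om s : {subset s <= Om} ->
  uniq s -> 3 < size s -> cycle completion s -> has_chord completion s.
Proof.
case: s => [|a0 [|a1 [|a2 [|a3 r]]]] // sub U _ _.
set s := [:: a0, a1, a2, a3 & r].
have UU := U; rewrite /= !inE !negb_or in UU.
case/and4P: UU => /and4P[n01 n02 n03 _] /and3P[n12 n13 _] /andP[n23 _] _.
have [N0 N1 N2] : [/\ next s a0 = a1, next s a1 = a2 & next s a2 = a3].
  by split; rewrite next_nth !inE !eqxx ?orbT /= !eqxx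
    ?(negbTE n01) ?(negbTE n02) ?(negbTE n12).
have s_i u : u \in [:: a0; a1; a2; a3] -> u \in s.
  by rewrite !inE => /or4P[] /eqP->; rewrite eqxx ?orbT.
have Om_i u : u \in [:: a0; a1; a2; a3] -> u \in Om by move/s_i/sub.
(* the diagonals [a0 a2] and [a1 a3] cannot both be the missing pair [a b] *)
have [ab02|nab02] := boolP (((a0 == a) && (a2 == b)) || ((a0 == b) && (a2 == a))).
  exists a1, a3; split; rewrite ?s_i ?inE ?eqxx ?orbT //.
  - apply/or3P; apply: Or33; rewrite !Om_i ?inE ?eqxx ?orbT //= n13 /=.
    apply/negP => ab13; case/orP: ab02 => /andP[/eqP E0 /eqP E2];
      case/orP: ab13 => /andP[/eqP E1 _];
      by move: n01 n12; rewrite E0 E2 E1 ?eqxx //= eq_sym ?eqxx.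
  - by rewrite N1.
  - apply: contra n03 => /eqP N3.
    have /(congr1 (prev s)) : next s a0 = next s a3 by rewrite N0 N3.
    by rewrite !prev_next ?s_i ?inE ?eqxx ?orbT // => ->.
exists a0, a2; split; rewrite ?s_i ?inE ?eqxx ?orbT //.
- by rewrite /completion !Om_i ?inE ?eqxx ?orbT //= n02 nab02 !orbT.
- by rewrite N0.
- by rewrite N2 eq_sym.
Qed.

Lemma chordless_cycle_sub_comp D s v : D \in comps e Om -> v \in D -> v \in s ->
  uniq s -> cycle completion s ->
  (forall u w, u \in s -> w \in s -> completion u w -> next s u = w \/ next s w = u) ->
  {subset s <= D :|: nbrs e D}.
Proof.
move=> HD vD vs U cyc chordless.
set f := next s.
have cycE u : u \in s -> completion u (f u) by move=> us; exact: next_cycle cyc us.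
have fs u : u \in s -> f u \in s by move=> us; rewrite /f mem_next.
have finj u w : f u = f w -> u = w by move/(congr1 (prev s)); rewrite /f !prev_next.
have [/hasP[u0 u0s /andP[u0D pD]]|/hasPn stay] :=
  boolP (has (fun u => (u \in D) && (f u \notin D)) s); last first.
  have allD : {in s, forall w, w \in D}.
    apply: (next_closed_all (P := fun w => w \in D) U vs vD) => w ws wD.
    by have := stay w ws; rewrite wD /= negbK.
  by move=> u us; rewrite inE allD.
set p := f u0 in pD.
have ps : p \in s by rewrite fs.
have pN : p \in nbrs e D := completion_out_comp HD u0D (cycE u0 u0s) pD.
have [/hasP[w0 w0s /andP[w0D qD]]|/hasPn enter] :=
  boolP (has (fun w => (w \in D) && (prev s w \notin D)) s); last first.
  have allnD : {in s, forall w, w \notin D}.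
    apply: (next_closed_all (P := fun w => w \notin D) U ps pD) => w ws wD.
    apply/negP => fwD; have := enter _ (fs w ws).
    by rewrite fwD /= /f prev_next // wD.
  by have := allnD v vs; rewrite vD.
set q := prev s w0 in qD.
have qs : q \in s by rewrite mem_prev.
have fq : f q = w0 by rewrite /f /q next_prev.
have qN : q \in nbrs e D.
  by apply: (completion_out_comp HD w0D) => //; rewrite completion_sym -fq cycE.
(* the cycle enters and leaves [D] through [p] and [f p] only *)
have only_p r : r \in s -> r \in nbrs e D -> r != p -> r = f p.
  move=> rs rN rp; case: (chordless r p rs ps (nbrs_completion HD rN pN rp)) => // /finj Er.
  by move: (nbrs_notin rN); rewrite Er u0D.
apply: (next_closed_all (P := fun w => w \in D :|: nbrs e D) U vs).
  by rewrite in_setU vD.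
move=> u us; rewrite -/f !in_setU => /orP[uD|uN].
  have [//|fuD] := boolP (f u \in D).
  by rewrite (completion_out_comp HD uD (cycE u us) fuD) orbT.
have [-> {u us uN}|up] := eqVneq u p.
  have [qp|qp] := eqVneq q p; first by rewrite -qp fq w0D.
  by rewrite -(only_p q qs qN qp) qN orbT.
rewrite (only_p u us uN up); have [qp|qp] := eqVneq q p.
  by move: (nbrs_notin uN); rewrite (only_p u us uN up) -qp fq w0D.
by rewrite -(only_p q qs qN qp) fq w0D.
Qed.

Lemma completion_chordal : chordal completion.
Proof.
move=> s U sz cyc; apply: NNPP => nochord.
have chordless u w : u \in s -> w \in s -> completion u w -> next s u = w \/ next s w = u.
  move=> us ws uw; apply: NNPP => nn; apply: nochord; exists u, w.
  by split => //; apply/eqP => E; apply: nn; [left|right].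
apply: nochord; have [sOm|/allPn[v vs vO]] := boolP (all (mem Om) s).
  by apply: completion_chord_Om => // u /(allP sOm).
have HD := comp_in_comps e vO.
have := chordless_cycle_sub_comp HD (mem_comp e Om v) vs U cyc chordless.
by move/completion_chord_comp; apply.
Qed.

End Completion.

Lemma pmc_nonadj_common_comp (T : finType) (e : rel T) (Om : {set T}) a b :
  simple_graph e -> pmc e Om -> a \in Om -> b \in Om -> a != b -> ~~ e a b ->
  exists2 D, D \in comps e Om & (a \in nbrs e D) && (b \in nbrs e D).
Proof.
move=> [esym eirr] [H [[[Hs eH Hch] Hmin] [OmK _]]] aO bO ab nab.
apply: NNPP => nex.
have apart D : D \in comps e Om -> ~~ ((a \in nbrs e D) && (b \in nbrs e D)).
  by move=> HD; apply/negP => abD; apply: nex; exists D.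
have tri : triangulation e (completion e H Om a b).
  split; last exact: completion_chordal.
  - split; first exact: completion_sym.
    move=> u; apply/negP => /or3P[|/existsP[D /and4P[_ _ _]]|/and4P[_ _]].
    + by rewrite eirr.
    + by case: Hs => _ ->.
    + by rewrite eqxx.
  - by move=> u v euv; rewrite /completion euv.
(* minimality of [H] forces the missing edge [a b] back into the completion *)
have := Hmin _ tri (completion_sub eH OmK) a b (OmK a b aO bO ab).
rewrite /completion /= (negbTE nab) /= !eqxx /= !andbF orbF.
case/existsP => D /and4P[HD aD bD _]; apply/negP: (apart D HD).
have inN u : u \in Om -> u \in D :|: nbrs e D -> u \in nbrs e D.
  by move=> uO; rewrite in_setU => /orP[/(comps_notin HD)|//]; rewrite uO.
by rewrite (inN a aO aD) (inN b bO bD).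
Qed.

Section ActivePair.
Variable T : finType.
Variables (e : rel T) (Om S C C1 : {set T}) (x y : T).
Hypothesis e_simple : simple_graph e.
Hypothesis Om_pmc : pmc e Om.
Hypothesis C1_comp : C1 \in comps e Om.
Hypothesis S_def : S = nbrs e C1.
Hypotheses (xS : x \in S) (yS : y \in S) (xy : x != y).
Hypothesis xy_inactive : ~~ plus_rel e Om S x y.
Hypothesis C_comp : C \in comps e S.
Hypothesis C_Om : ~~ [disjoint C & Om].

Definition DS := \bigcup_(D in comps e S | D != C) D.
Definition Dx := \bigcup_(D in comps e Om | (D \subset C) && ~~ [disjoint D & nbr e x]) D.
Definition Dy := \bigcup_(D in comps e Om | (D \subset C) && [disjoint D & nbr e x]) D.

Let esym : symmetric e. Proof. by case: e_simple. Qed.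

Lemma S_sub_Om : S \subset Om.
Proof. by rewrite S_def; apply/subsetP => u /(nbrs_comps_sub esym C1_comp). Qed.

Lemma notin_Om_S u : u \notin Om -> u \notin S.
Proof. by apply: contra; apply: (subsetP S_sub_Om). Qed.

Lemma C_edge u w : u \in C -> e u w -> w \notin S -> w \in C.
Proof. exact: (comps_edge esym C_comp). Qed.

Lemma comps_Om_meet_C D u : D \in comps e Om -> u \in D -> u \in C -> D \subset C.
Proof.
move=> HD uD uC; rewrite (comps_eq esym C_comp uC).
exact: comps_sub_comp S_sub_Om HD uD.
Qed.

Lemma DxUDy : Dx :|: Dy = C :\: Om.
Proof.
rewrite -(bigcup_comps_sub esym S_sub_Om C_comp).
rewrite [RHS](bigID (fun D : {set T} => [disjoint D & nbr e x])) /= setUC.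
by congr (_ :|: _); apply: eq_bigl => D; rewrite andbA.
Qed.

Lemma Om_notin_S_mem_C a : a \in Om -> a \notin S -> a \in C.
Proof.
move=> aO aS; have [c cC cO] := meetP _ _ C_Om.
have [<-//|ca] := eqVneq c a.
have [eca|neca] := boolP (e c a); first exact: C_edge cC eca aS.
have [D HD /andP[cN aN]] := pmc_nonadj_common_comp e_simple Om_pmc cO aO ca neca.
have [d1 d1D [ed1c _]] := nbrsP _ HD cN.
have [d2 d2D [ed2a _]] := nbrsP _ HD aN.
have d1C : d1 \in C.
  by apply: C_edge cC _ (notin_Om_S (comps_notin HD d1D)); rewrite esym.
exact: C_edge (subsetP (comps_Om_meet_C HD d1D d1C) d2 d2D) ed2a aS.
Qed.

Lemma comps_Om_in_C_nbrs D : D \in comps e Om -> D \subset C -> ~~ (nbrs e D \subset S).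
Proof.
move=> HD DC; apply/negP => NS.
have HDS := comps_of_nbrs_sub esym S_sub_Om HD NS.
have /imsetP[v _ DE] := HD; have vD : v \in D by rewrite DE mem_comp.
have [c cC cO] := meetP _ _ C_Om.
rewrite -(comps_meet_eq esym HDS C_comp vD (subsetP DC v vD)) in cC.
by move: cO; rewrite (negbTE (comps_notin HD cC)).
Qed.

Lemma C1_comp_S : C1 \in comps e S.
Proof. by apply: (comps_of_nbrs_sub esym S_sub_Om C1_comp); rewrite S_def. Qed.

Lemma C1_neq_C : C1 != C.
Proof.
apply: contraTneq C_Om => <-; apply/negP => /meetP[u uC1].
exact/negP/(comps_notin C1_comp uC1).
Qed.

Lemma xy_apart_in_C D : D \in comps e Om -> D \subset C ->
  ~~ ((x \in nbrs e D) && (y \in nbrs e D)).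
Proof.
move=> HD DC; apply: contra xy_inactive => /andP[xN yN].
rewrite /plus_rel xy /=; apply/orP; right; apply/existsP; exists D.
by rewrite HD xN yN comps_Om_in_C_nbrs.
Qed.

Lemma common_comp_in_C u v : u \in Om -> u \notin S -> v \in Om -> u != v -> ~~ e u v ->
  exists2 D, D \in comps e Om & [/\ D \subset C, u \in nbrs e D & v \in nbrs e D].
Proof.
move=> uO uS vO uv nuv.
have [D HD /andP[uN vN]] := pmc_nonadj_common_comp e_simple Om_pmc uO vO uv nuv.
exists D => //; split => //; have [d dD [edu _]] := nbrsP _ HD uN.
apply: (comps_Om_meet_C HD dD).
by apply: C_edge (Om_notin_S_mem_C uO uS) _ (notin_Om_S (comps_notin HD dD)); rewrite esym.
Qed.

Lemma S_nbr_DS z : z \in S -> ~~ [disjoint nbr e z & DS].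
Proof.
move=> zS; have := zS; rewrite S_def => /(nbrsP _ C1_comp)[d dC1 [edz _]].
apply: (nbr_meet (d := d)); first by rewrite esym.
by apply/bigcupP; exists C1; rewrite ?C1_comp_S ?C1_neq_C.
Qed.

Lemma S_nbr_C_setD z : ~ (exists2 t, t \in Om & Om :\: S = nbr e t :&: C) ->
  z \in S -> ~~ [disjoint nbr e z & C :\: Om].
Proof.
move=> no1 zS; apply/negP => avoid; apply: no1; exists z; first exact: subsetP S_sub_Om z zS.
apply/setP => a; rewrite !inE; apply/andP/andP => [[aS aO]|[eza aC]].
  split; last exact: Om_notin_S_mem_C aO aS.
  apply: contraT => neza; have az : a != z by apply: contraNneq aS => ->.
  have neaz : ~~ e a z by rewrite esym.
  have [D HD [DC aN zN]] := common_comp_in_C aO aS (subsetP S_sub_Om z zS) az neaz.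
  have [d dD [edz _]] := nbrsP _ HD zN.
  have dN : d \in nbr e z by rewrite inE esym.
  by have := disjointFr avoid dN; rewrite !inE (subsetP DC d dD) (comps_notin HD dD).
split; first exact: comps_notin C_comp aC.
apply: contraT => aO; have aN : a \in nbr e z by rewrite inE.
by have := disjointFr avoid aN; rewrite !inE aO aC.
Qed.

Lemma Om_setD_nbr_DS z : z \in Om -> z \notin S -> [disjoint nbr e z & DS].
Proof.
move=> zO zS; rewrite /DS (bigcup_comps_neq esym C_comp).
apply: contraT => /meetP[u]; rewrite !inE negb_or => ezu /andP[uC uS].
by move: uC; rewrite (C_edge (Om_notin_S_mem_C zO zS) ezu uS).
Qed.

Lemma Om_setD_nbr_x z : z \in Om -> z \notin S -> ~~ [disjoint nbr e z & x |: Dx].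
Proof.
move=> zO zS; have [ezx|nezx] := boolP (e z x); first by apply: (nbr_meet ezx); rewrite setU11.
have zx : z != x by apply: contraNneq zS => ->.
have [D HD [DC zN xN]] := common_comp_in_C zO zS (subsetP S_sub_Om x xS) zx nezx.
have [d dD [edz _]] := nbrsP _ HD zN.
have [d' d'D [ed'x _]] := nbrsP _ HD xN.
apply: (nbr_meet (d := d)); first by rewrite esym.
rewrite in_setU1; apply/orP; right; apply/bigcupP; exists D => //.
by rewrite HD DC; apply/meetP; exists d'; rewrite // inE esym.
Qed.

Lemma Om_setD_nbr_y z : z \in Om -> z \notin S -> ~~ [disjoint nbr e z & y |: Dy].
Proof.
move=> zO zS; have [ezy|nezy] := boolP (e z y); first by apply: (nbr_meet ezy); rewrite setU11.
have zy : z != y by apply: contraNneq zS => ->.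
have [D HD [DC zN yN]] := common_comp_in_C zO zS (subsetP S_sub_Om y yS) zy nezy.
have [d dD [edz _]] := nbrsP _ HD zN.
apply: (nbr_meet (d := d)); first by rewrite esym.
rewrite in_setU1; apply/orP; right; apply/bigcupP; exists D => //.
rewrite HD DC; apply: contraT => /meetP[d' d'D]; rewrite inE esym => ed'x.
have xN := in_nbrs_comps HD d'D ed'x (subsetP S_sub_Om x xS).
by have := xy_apart_in_C HD DC; rewrite xN yN.
Qed.

Lemma Om_setD_nbr_C_setD z : ~ (exists2 t, t \in Om & Om = cnbr e t) ->
  z \in Om -> z \notin S -> ~~ [disjoint nbr e z & C :\: Om].
Proof.
move=> no2 zO zS; apply/negP => avoid; apply: no2; exists z => //.
have nbr_Om u : e z u -> u \in Om.
  move=> ezu; apply: contraT => uO.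
  have uC := C_edge (Om_notin_S_mem_C zO zS) ezu (notin_Om_S uO).
  have uN : u \in nbr e z by rewrite inE.
  by have := disjointFr avoid uN; rewrite !inE uO uC.
apply/setP => a; rewrite !inE; apply/idP/idP => [aO|/orP[/eqP->//|/nbr_Om//]].
have [//|az] := eqVneq a z; rewrite eq_sym in az.
apply/orP; right; apply: contraT => neza.
have [D HD /andP[zN _]] := pmc_nonadj_common_comp e_simple Om_pmc zO aO az neza.
have [d dD [edz _]] := nbrsP _ HD zN.
by have := nbr_Om d; rewrite esym edz (negbTE (comps_notin HD dD)) => /(_ isT).
Qed.

Lemma notin_Om_nbr_DS z : z \notin Om -> ~~ [disjoint nbr e z & DS] ->
  [disjoint nbr e z & C :\: Om].
Proof.
rewrite /DS (bigcup_comps_neq esym C_comp) => zO /meetP[u]; rewrite !inE negb_or.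
move=> ezu /andP[uC uS]; apply: contraT => /meetP[w]; rewrite !inE => ezw /andP[_ wC].
have zC : z \in C by apply: C_edge wC _ (notin_Om_S zO); rewrite esym.
by move: uC; rewrite (C_edge zC ezu uS).
Qed.

Lemma notin_Om_nbr_xy z : z \notin Om -> ~~ [disjoint nbr e z & C :\: Om] ->
  ~~ [disjoint nbr e z & x |: Dx] -> [disjoint nbr e z & y |: Dy].
Proof.
move=> zO /meetP[w]; rewrite !inE => ezw /andP[wO wC].
set D := Defs.comp e Om w.
have HD : D \in comps e Om := comp_in_comps e wO.
have wD : w \in D := mem_comp e Om w.
have ewz : e w z by rewrite esym.
have zD := comps_edge esym HD wD ewz zO.
have DC := comps_Om_meet_C HD wD wC.
have same (D2 : {set T}) u : D2 \in comps e Om -> u \in D2 -> e z u -> D2 = D.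
  move=> HD2 uD2 ezu.
  exact (comps_meet_eq esym HD2 HD uD2 (comps_edge esym HD zD ezu (comps_notin HD2 uD2))).
have [Dx_off|Dx_on] := boolP [disjoint D & nbr e x].
  case/meetP=> u; rewrite inE in_setU1 => ezu /orP[/eqP ux|].
    by have := disjointFr Dx_off zD; rewrite inE esym -ux ezu.
  by case/bigcupP=> D2 /and3P[HD2 _ D2x] uD2; rewrite (same D2 u) ?Dx_off in D2x.
move=> _; apply: contraT => /meetP[u]; rewrite inE in_setU1 => ezu /orP[/eqP uy|].
  have [d dD] := meetP _ _ Dx_on; rewrite inE esym => edx.
  have xN := in_nbrs_comps HD dD edx (subsetP S_sub_Om x xS).
  have ezy : e z y by rewrite -uy.
  have yN := in_nbrs_comps HD zD ezy (subsetP S_sub_Om y yS).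
  by have := xy_apart_in_C HD DC; rewrite xN yN.
by case/bigcupP=> D2 /and3P[HD2 _ D2x] uD2; rewrite (same D2 u) // (negbTE Dx_on) in D2x.
Qed.

Theorem Om_char :
  ~ (exists2 t, t \in Om & Om :\: S = nbr e t :&: C) ->
  ~ (exists2 t, t \in Om & Om = cnbr e t) ->
  forall z, z \in Om <->
    ((~~ [disjoint nbr e z & DS] && ~~ [disjoint nbr e z & Dx :|: Dy]) \/
     [/\ [disjoint nbr e z & DS], ~~ [disjoint nbr e z & x |: Dx],
          ~~ [disjoint nbr e z & y |: Dy] & ~~ [disjoint nbr e z & Dx :|: Dy]]).
Proof.
rewrite DxUDy => no1 no2 z; split => [zO|].
  have [zS|zS] := boolP (z \in S); first by left; rewrite S_nbr_DS ?S_nbr_C_setD.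
  by right; rewrite Om_setD_nbr_DS ?Om_setD_nbr_x ?Om_setD_nbr_y ?Om_setD_nbr_C_setD.
case=> [/andP[zDS zC]|[_ zx zy zC]]; apply: contraT => zO.
  by move: zC; rewrite notin_Om_nbr_DS.
by move: zy; rewrite notin_Om_nbr_xy.
Qed.

End ActivePair.

Theorem lemma2 (T : finType) (e : rel T) (W Om S C : {set T}) (x y : T) :
  simple_graph e ->
  vertex_cover e W ->
  pmc e Om ->
  S \subset Om ->
  active_sep e Om S ->
  x \in S -> y \in S ->
  active_pair e Om S x y ->
  C \in comps e S ->
  ~~ [disjoint C & Om] ->
  let DS := \bigcup_(D in comps e S | D != C) D in
  let Dx := \bigcup_(D in comps e Om | (D \subset C) && ~~ [disjoint D & nbr e x]) D in
  let Dy := \bigcup_(D in comps e Om | (D \subset C) && [disjoint D & nbr e x]) D in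
  let DSW := DS :&: W in
  let DxW := Dx :&: W in
  let DyW := Dy :&: W in
  (exists2 t, t \in Om & Om :\: S = nbr e t :&: C) \/
  (exists2 t, t \in Om & Om = cnbr e t) \/
  (forall z, z \notin W ->
     (z \in Om <->
      ((~~ [disjoint nbr e z & DSW] && ~~ [disjoint nbr e z & DxW :|: DyW]) \/
       [/\ [disjoint nbr e z & DSW],
           ~~ [disjoint nbr e z & x |: DxW],
           ~~ [disjoint nbr e z & y |: DyW]
         & ~~ [disjoint nbr e z & DxW :|: DyW]]))).
Proof.
move=> e_simple W_cover Om_pmc _ [_ [C1 C1_comp S_def] _] xS yS [_ _ _ xy xy_inactive]
  C_comp C_Om DS Dx Dy DSW DxW DyW.
have [|no1] := classic (exists2 t, t \in Om & Om :\: S = nbr e t :&: C); first by left.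
have [|no2] := classic (exists2 t, t \in Om & Om = cnbr e t); first by right; left.
right; right => z zW.
have NW : nbr e z \subset W.
  by apply/subsetP => u; rewrite inE => /W_cover; rewrite (negbTE zW).
have NxW v : nbr e z \subset v |: W by rewrite (subset_trans NW) ?subsetUr.
rewrite /DSW /DxW /DyW -setIUl !setUIr !disjoint_setIr_sub //.
exact: (Om_char e_simple Om_pmc C1_comp S_def xS yS xy xy_inactive C_comp C_Om no1 no2).
Qed.
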